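(* Let $k\ge2$ and $n\ge k$ be integers, let $\beta=\sum_{i=1}^n i^{k-1}$ and $c_i=i^{k-1}/\beta$ for $i=1,\dots,n$. In the position-randomized auction setting described in the context, suppose all $k-1$ disadvantaged bidders use the initial bid sequence $c_1,\dots,c_n$ and the uniform distribution on permutations. Then for every position-randomized strategy of the adversary ${\mathcal A}$, each disadvantaged bidder wins at least $\frac{1}{k-1}\left(n-\frac{\beta-1}{n^{k-1}}\right)$ objects in expectation. Moreover this is optimal: for every initial bid sequence and every permutation distribution used in common by the disadvantaged bidders, ${\mathcal A}$ has a position-randomized strategy under which each disadvantaged bidder wins at most $\frac{1}{k-1}\left(n-\frac{\beta-1}{n^{k-1}}\right)$ objects in expectation.
   Context: Auction model: there are $k$ bidders, one adversary ${\mathcal A}$ and $k-1$ disadvantaged bidders, and $n$ objects auctioned simultaneously. Each object is won by the highest bidder on it, paying his bid; if $m$ bidders tie for the highest bid, each wins with probability $1/m$. All bidders are restricted to position-randomized bidding algorithms: a bidder chooses an initial sequence $x_1,\dots,x_n$ of positive reals with $\sum x_j\le 1$ (the budget) and a probability distribution on permutations $\sigma$ of $\{1,\dots,n\}$; he draws $\sigma$ from that distribution and bids $x_j$ on object $\sigma(j)$. All disadvantaged bidders use the same initial sequence and the same permutation distribution, each drawing his permutation independently; ${\mathcal A}$ knows their algorithm, and his permutation is drawn independently of theirs. Expected numbers of won objects are over all this randomness. *)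

From mathcomp Require Import all_boot all_order all_algebra all_fingroup.
From mathcomp Require Import reals.
Set Implicit Arguments. Unset Strict Implicit. Unset Printing Implicit Defensive.
Import Order.TTheory GRing.Theory Num.Theory.
Local Open Scope ring_scope.

(* Objects are 'I_n.  A permutation s : {perm 'I_n} means: the bidder bids
   x_j on object s(j); hence object o receives the bid x_(s^-1 o). *)
Definition bid_on (R : Type) (n : nat) (x : 'I_n -> R) (s : {perm 'I_n})
  (o : 'I_n) : R := x ((s^-1)%g o).

(* Bidders: None = the adversary A, Some d (d : 'I_m) = disadvantaged bidder d. *)
Definition all_bids (R : Type) (n m : nat) (a x : 'I_n -> R)
  (sA : {perm 'I_n}) (sD : {ffun 'I_m -> {perm 'I_n}}) (o : 'I_n)
  (i : option 'I_m) : R :=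
  match i with None => bid_on a sA o | Some d => bid_on x (sD d) o end.

Definition win_share (R : realFieldType) (m : nat) (b : option 'I_m -> R)
  (i : option 'I_m) : R :=
  if [forall j, b j <= b i] then (#|[set j | b j == b i]|%:R)^-1 else 0.

Definition bid_seq (R : realFieldType) (n : nat) (x : 'I_n -> R) : Prop :=
  (forall j, 0 < x j) /\ \sum_j x j <= 1.

Definition perm_dist (R : realFieldType) (n : nat) (p : {perm 'I_n} -> R) : Prop :=
  (forall s, 0 <= p s) /\ \sum_s p s = 1.

Definition unif_perm (R : realFieldType) (n : nat) : {perm 'I_n} -> R :=
  fun _ => ((n`!)%:R)^-1.

Definition exp_wins (R : realFieldType) (n m : nat) (a : 'I_n -> R)
  (q : {perm 'I_n} -> R) (x : 'I_n -> R) (p : {perm 'I_n} -> R) (d : 'I_m) : R :=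
  \sum_(sA : {perm 'I_n}) \sum_(sD : {ffun 'I_m -> {perm 'I_n}})
    q sA * (\prod_(e : 'I_m) p (sD e)) *
    \sum_(o : 'I_n) win_share (all_bids a x sA sD o) (Some d).

From mathcomp Require Import all_boot all_order all_algebra all_fingroup.
From mathcomp Require Import reals.
From mathcomp Require Import ring lra.
Set Implicit Arguments. Unset Strict Implicit. Unset Printing Implicit Defensive.
Import Order.TTheory GRing.Theory Num.Theory.
Local Open Scope ring_scope.

(* Write m = k - 1 and let W be the expected number of objects won by the adversary.
   Every object is won by somebody and the disadvantaged bidders are exchangeable, so
   each of them wins (n - W) / m objects: both claims are bounds on W.

   Against the bids i^m / beta in uniformly random positions, an adversary's bid y on
   an object wins it with probability at most ((L/n)^m + (S/n)^m) / 2, where L and S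
   count the i <= n with i^m <= y beta and i^m < y beta.  Now L^m <= y beta, strictly
   unless y beta = L^m, and in that tied case S < L, so the bound loses at least 1/2.
   The scaled bids y beta sum to at most beta, so integrality gives n^m W <= beta - 1.

   Conversely, against bids x the adversary bids x_j + eps for every j but a minimizer
   j0 of x, for which he bids eps = x_j0 / n (so he spends exactly as much), and he
   places his bids in uniformly random positions.
   The bid y wins object o whenever all m opponents bid below y there, which for each
   of them has probability P_o(y), with sum_o P_o(y) = #{i | x_i < y}.  The power mean
   inequality bounds sum_o P_o(y)^m below by #{i | x_i < y}^m / n^(m-1), and since
   x_j + eps exceeds x_j0 and every x_i <= x_j, these counts for j <> j0 dominate
   2, ..., n, whence n^m W >= 2^m + ... + n^m = beta - 1. *)

Lemma sum_ffun_prod (R : comNzRingType) (I J : finType) (p : J -> R) (Q : pred J) :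
  \sum_(f : {ffun I -> J} | [forall i, Q (f i)]) \prod_i p (f i) =
  (\sum_(j | Q j) p j) ^+ #|I|.
Proof.
rewrite -prodr_const bigA_distr_big; apply: eq_bigl => f.
by apply/forallP/ffun_onP.
Qed.

Lemma sum_option (V : nmodType) (m : nat) (F : option 'I_m -> V) :
  \sum_i F i = F None + \sum_e F (Some e).
Proof.
rewrite (bigD1 None) //=; congr (_ + _).
rewrite (reindex_omap Some id) //=; last by case.
by apply: eq_bigl => e; rewrite eqxx.
Qed.

Lemma sumr_mul_natb (R : pzSemiRingType) (I : finType) (F : I -> R) (P : pred I) :
  \sum_i F i * (P i : nat)%:R = \sum_(i | P i) F i.
Proof.
by rewrite [RHS]big_mkcond; apply: eq_bigr => i _; case: (P i); rewrite ?mulr1 ?mulr0.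
Qed.

Lemma card_ord_set_le (n : nat) (A : {set 'I_n}) (P : pred nat) :
  P 0%N -> (forall j, j \in A -> P j.+1) -> exists2 i, P i & (#|A| <= i)%N.
Proof.
move=> P0 PA; exists (\max_(j in A) j.+1)%N.
  by apply: (big_ind P) => // i j Pi Pj; case: leqP.
have lt_max j : j \in A -> (j < \max_(j in A) j.+1)%N.
  by move=> jA; apply: (leq_bigmax_cond _ jA).
rewrite cardE -(size_map val) -(size_iota 0 (\max_(j in A) j.+1)).
apply: uniq_leq_size; first by rewrite map_inj_uniq ?enum_uniq //; apply: val_inj.
by move=> _ /mapP [j jA ->]; rewrite mem_iota lt_max // -mem_enum.
Qed.

Section PowerMean.
Variables (R : realFieldType) (I : finType).

Lemma chebyshev_sum_expr (z : I -> R) (m : nat) : (forall i, 0 <= z i) ->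
  (\sum_i z i) * (\sum_i z i ^+ m) <= #|I|%:R * \sum_i z i ^+ m.+1.
Proof.
move=> z_ge0.
pose T i j := z i * z i ^+ m - z i * z j ^+ m.
have T_sym_ge0 i j : 0 <= T i j + T j i.
  have -> : T i j + T j i = (z i - z j) * (z i ^+ m - z j ^+ m) by rewrite /T; ring.
  have [le_ij|lt_ji] := lerP (z i) (z j).
    by apply: mulr_le0; rewrite subr_le0 //; apply: lerXn2r; rewrite ?nnegrE.
  apply: mulr_ge0; rewrite subr_ge0 ?(ltW lt_ji) //.
  by apply: lerXn2r; rewrite ?nnegrE // ltW.
have sum_T : \sum_i \sum_j T i j =
    #|I|%:R * \sum_i z i ^+ m.+1 - (\sum_i z i) * (\sum_i z i ^+ m).
  rewrite /T; under eq_bigr do rewrite sumrB sumr_const -mulr_sumr.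
  rewrite sumrB mulr_suml; congr (_ - _).
  by rewrite mulr_sumr; apply: eq_bigr => i _; rewrite exprS mulr_natl.
have : 0 <= \sum_i \sum_j (T i j + T j i) by do 2!apply: sumr_ge0 => ? _.
under eq_bigr do rewrite big_split /=.
rewrite big_split /= [X in _ + X]exchange_big /= sum_T -subr_ge0; lra.
Qed.

Lemma expr_sum_le (z : I -> R) (m : nat) : (forall i, 0 <= z i) ->
  (\sum_i z i) ^+ m.+1 <= #|I|%:R ^+ m * \sum_i z i ^+ m.+1.
Proof.
move=> z_ge0; elim: m => [|m IH].
  by rewrite expr0 mul1r expr1; under [X in _ <= X]eq_bigr do rewrite expr1.
have sum_ge0 : 0 <= \sum_i z i by apply: sumr_ge0.
rewrite exprS; apply: (le_trans (ler_wpM2l sum_ge0 IH)).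
rewrite mulrCA exprS [_ * _ ^+ m]mulrC -mulrA; apply: ler_wpM2l; first by rewrite exprn_ge0.
exact: chebyshev_sum_expr.
Qed.

End PowerMean.

Lemma sum_rank_ge (d : Order.disp_t) (X : orderType d) (T : finType) (x : T -> X)
  (F : nat -> nat) (A : {set T}) : {homo F : i j / (i <= j)%N} ->
  (\sum_(i < #|A|) F i.+1 <= \sum_(j in A) F #|[set i in A | (x i <= x j)%O]|)%N.
Proof.
move=> F_mono; move cardA: #|A| => N; elim: N A cardA => [|N IH] A cardA.
  by rewrite big_ord0.
have [j1 j1A] : exists j1, j1 \in A by apply/card_gt0P; rewrite cardA.
pose jm := [arg max_(j > j1 in A) x j]%O.
have [jmA jm_max] : jm \in A /\ forall j, j \in A -> (x j <= x jm)%O.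
  by rewrite /jm; case: arg_maxP.
rewrite big_ord_recr /= (bigD1 jm) //= addnC leq_add //.
  apply: F_mono; rewrite -cardA; apply/subset_leq_card/subsetP => i iA.
  by rewrite inE iA jm_max.
apply: leq_trans (IH (A :\ jm) _) _.
  by move: cardA; rewrite (cardsD1 jm) jmA add1n => -[].
rewrite (eq_bigl (fun j => (j \in A) && (j != jm))); last by move=> j; rewrite in_setD1 andbC.
apply: leq_sum => j _; apply/F_mono/subset_leq_card/subsetP => i.
by rewrite !inE => /andP [/andP [_ ->] ->].
Qed.

Section WinShare.
Variables (R : realFieldType) (m : nat).
Implicit Types (b : option 'I_m -> R) (i : option 'I_m).

Lemma win_share_ge0 b i : 0 <= win_share b i.
Proof. by rewrite /win_share; case: ifP; rewrite ?invr_ge0. Qed.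

Lemma sum_win_share b : \sum_i win_share b i = 1.
Proof.
pose top := [arg max_(i > None) b i]%O.
have top_max j : b j <= b top by rewrite /top; case: arg_maxP => // i _; apply.
have shareE i : win_share b i =
    if b i == b top then #|[set j | b j == b top]|%:R^-1 else 0.
  rewrite /win_share; have [->|ne] := eqVneq (b i) (b top).
    by have -> : [forall j, b j <= b top] by apply/forallP.
  case: forallP => // bi_max.
  by move: ne; rewrite eq_le top_max bi_max.
under eq_bigr do rewrite shareE.
rewrite -big_mkcond sumr_const -[_ *+ _]mulr_natr.
have -> : #|[pred i | b i == b top]| = #|[set j | b j == b top]|.
  by apply: eq_card => j; rewrite inE.
rewrite mulVf // pnatr_eq0 -lt0n; apply/card_gt0P.
by exists top; rewrite inE.
Qed.

Lemma win_share_perm b b' (g : option 'I_m -> option 'I_m) i :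
  injective g -> (forall j, b' j = b (g j)) -> win_share b' i = win_share b (g i).
Proof.
move=> g_inj b'E; rewrite /win_share b'E.
have -> : [forall j, b' j <= b (g i)] = [forall j, b j <= b (g i)].
  apply/forallP/forallP => le_bj j; last by rewrite b'E.
  have [g' _ g'K] := injF_bij g_inj.
  by rewrite -(g'K j) -b'E.
congr (if _ then _ else _); congr (_%:R^-1).
rewrite -[in RHS](card_preimset _ g_inj); apply: eq_card => j.
by rewrite !inE b'E.
Qed.

Lemma win_share_top b :
  [forall e, b (Some e) < b None] -> win_share b None = 1.
Proof.
move=> /forallP b_lt; rewrite /win_share.
have -> : [forall j, b j <= b None] by apply/forallP => -[e|] //; rewrite ltW.
have -> : [set j | b j == b None] = [set None].
  by apply/setP => -[e|]; rewrite !inE ?eqxx // (lt_eqF (b_lt e)).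
by rewrite cards1 invr1.
Qed.

Lemma win_share_None_le b :
  win_share b None <= (([forall e, b (Some e) <= b None] : nat)%:R +
                       ([forall e, b (Some e) < b None] : nat)%:R) / 2.
Proof.
have [b_lt|not_lt] := boolP [forall e, b (Some e) < b None].
  have b_le : [forall e, b (Some e) <= b None].
    by apply/forallP => e; rewrite ltW // (forallP b_lt).
  by rewrite win_share_top // b_le /=; lra.
rewrite /= addr0 /win_share; case: forallP => [b_le|]; last by rewrite divr_ge0 ?ler0n.
have [e] := forallPn not_lt; rewrite lt_neqAle b_le andbT negbK => /eqP tie.
have two_le : (2 <= #|[set j | b j == b None]|)%N.
  by rewrite (cardD1 None) (cardD1 (Some e)) !inE tie !eqxx.
have -> : [forall e, b (Some e) <= b None] by apply/forallP => e'; apply: b_le.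
by rewrite div1r lef_pV2 ?posrE ?ltr0n ?ler_nat // (leq_trans _ two_le).
Qed.

End WinShare.

Section ExpectedShare.
Variables (R : realFieldType) (n m : nat).
Variables (a : 'I_n -> R) (q : {perm 'I_n} -> R) (x : 'I_n -> R) (p : {perm 'I_n} -> R).
Hypothesis p_dist : perm_dist p.

Definition exp_share (sA : {perm 'I_n}) (o : 'I_n) (i : option 'I_m) : R :=
  \sum_(sD : {ffun 'I_m -> {perm 'I_n}}) (\prod_e p (sD e)) *
    win_share (all_bids a x sA sD o) i.

Lemma sum_prod_perm_dist :
  \sum_(sD : {ffun 'I_m -> {perm 'I_n}}) \prod_e p (sD e) = 1.
Proof.
case: p_dist => _ p1.
by rewrite -(bigA_distr_bigA (fun _ : 'I_m => p)) big1 // => e _; rewrite p1.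
Qed.

Lemma sum_exp_share sA o : \sum_i exp_share sA o i = 1.
Proof.
rewrite -[in RHS]sum_prod_perm_dist /exp_share exchange_big /=.
by apply: eq_bigr => sD _; rewrite -mulr_sumr sum_win_share mulr1.
Qed.

Lemma exp_share_Some sA o d d' : exp_share sA o (Some d) = exp_share sA o (Some d').
Proof.
pose t := tperm d d'.
pose swap (sD : {ffun 'I_m -> {perm 'I_n}}) := [ffun e => sD (t e)].
have swapK : involutive swap by move=> sD; apply/ffunP => e; rewrite !ffunE tpermK.
rewrite /exp_share (reindex_inj (inv_inj swapK)); apply: eq_bigr => sD _.
congr (_ * _).
  rewrite [RHS](reindex_inj (inv_inj (tpermK d d'))).
  by apply: eq_bigr => e _; rewrite ffunE.
rewrite (@win_share_perm _ _ (all_bids a x sA sD o) _ (omap t)) /= ?tpermL //.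
  by move=> [e|] [e'|] //= [] /perm_inj ->.
by move=> [e|] //=; rewrite ffunE.
Qed.

Lemma exp_share_SomeE sA o d : (0 < m)%N ->
  exp_share sA o (Some d) = m%:R^-1 * (1 - exp_share sA o None).
Proof.
move=> m_gt0; have := sum_exp_share sA o; rewrite sum_option.
under eq_bigr do rewrite (exp_share_Some _ _ _ d).
rewrite sumr_const card_ord => sum1.
have -> : 1 - exp_share sA o None = exp_share sA o (Some d) *+ m.
  by rewrite -sum1 addrC addrK.
by rewrite -[exp_share _ _ _ *+ m]mulr_natl mulKf // pnatr_eq0 -lt0n.
Qed.

Lemma exp_share_None_ge sA o :
  (\sum_(s | bid_on x s o < bid_on a sA o) p s) ^+ m <= exp_share sA o None.
Proof.
case: p_dist => p_ge0 _.
rewrite -[in X in X <= _](card_ord m) -sum_ffun_prod /exp_share.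
rewrite [X in _ <= X](bigID (fun sD : {ffun 'I_m -> {perm 'I_n}} =>
  [forall e, bid_on x (sD e) o < bid_on a sA o])) /=.
rewrite -[X in X <= _]addr0; apply: lerD.
  by apply/ler_sum => sD all_lt; rewrite win_share_top ?mulr1.
apply: sumr_ge0 => sD _.
by rewrite mulr_ge0 ?win_share_ge0 //; apply: prodr_ge0.
Qed.

Lemma exp_share_None_le sA o :
  exp_share sA o None <=
  ((\sum_(s | bid_on x s o <= bid_on a sA o) p s) ^+ m +
   (\sum_(s | bid_on x s o < bid_on a sA o) p s) ^+ m) / 2.
Proof.
case: p_dist => p_ge0 _.
have W_ge0 (sD : {ffun 'I_m -> {perm 'I_n}}) : 0 <= \prod_e p (sD e).
  by apply: prodr_ge0 => e _.
rewrite /exp_share.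
apply: le_trans (ler_sum _ (fun sD _ => ler_wpM2l (W_ge0 sD) (win_share_None_le _))) _.
under eq_bigr do rewrite mulrA mulrDr.
rewrite -mulr_suml big_split /= !sumr_mul_natb /=.
rewrite (sum_ffun_prod _ p (fun s => bid_on x s o <= bid_on a sA o)).
by rewrite (sum_ffun_prod _ p (fun s => bid_on x s o < bid_on a sA o)) card_ord.
Qed.

Definition adv_wins : R :=
  \sum_(sA : {perm 'I_n}) \sum_(sD : {ffun 'I_m -> {perm 'I_n}})
    q sA * (\prod_e p (sD e)) * \sum_o win_share (all_bids a x sA sD o) None.

Lemma expected_winsE (i : option 'I_m) :
  \sum_sA \sum_(sD : {ffun 'I_m -> {perm 'I_n}})
    q sA * (\prod_e p (sD e)) * \sum_o win_share (all_bids a x sA sD o) i =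
  \sum_sA q sA * \sum_o exp_share sA o i.
Proof.
apply: eq_bigr => sA _; rewrite /exp_share exchange_big mulr_sumr /=.
by apply: eq_bigr => sD _; rewrite -mulrA !mulr_sumr.
Qed.

Lemma exp_wins_adv_wins (d : 'I_m) : (0 < m)%N -> perm_dist q ->
  exp_wins a q x p d = m%:R^-1 * (n%:R - adv_wins).
Proof.
move=> m_gt0 [_ q1]; rewrite /exp_wins /adv_wins !expected_winsE.
under eq_bigr => sA _.
  under eq_bigr do rewrite exp_share_SomeE //.
  rewrite -mulr_sumr sumrB sumr_const card_ord -mulr_natl mulr1 mulrCA mulrBr.
  over.
by rewrite -mulr_sumr sumrB -mulr_suml q1 mul1r.
Qed.

End ExpectedShare.

Arguments exp_share {R n} m a x p sA o i.

Section UniformPerm.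
Variables (R : realFieldType) (n : nat).

Lemma perm_dist_unif : perm_dist (@unif_perm R n).
Proof.
split=> [s|]; first by rewrite /unif_perm invr_ge0 ler0n.
rewrite /unif_perm sumr_const card_Sn -[_ *+ _]mulr_natr mulVf //.
by rewrite pnatr_eq0 -lt0n fact_gt0.
Qed.

Lemma sum_perm_inv_indep (F : 'I_n -> R) (o o' : 'I_n) :
  \sum_(s : {perm 'I_n}) F ((s^-1)%g o) = \sum_(s : {perm 'I_n}) F ((s^-1)%g o').
Proof.
rewrite [RHS](reindex_inj (mulIg (tperm o o'))) /=.
by apply: eq_bigr => s _; rewrite invMg permM tpermV tpermR.
Qed.

Lemma sum_unif_perm (F : 'I_n -> R) (o : 'I_n) :
  \sum_s @unif_perm R n s * F ((s^-1)%g o) = n%:R^-1 * \sum_j F j.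
Proof.
have n_gt0 : (0 < n)%N by case: (n) o => [[]|].
have card_mul : n%:R * \sum_(s : {perm 'I_n}) F ((s^-1)%g o) = n`!%:R * \sum_j F j.
  transitivity (\sum_(o' : 'I_n) \sum_(s : {perm 'I_n}) F ((s^-1)%g o')).
    rewrite -[in RHS](eq_bigr _ (fun o' _ => sum_perm_inv_indep F o o')).
    by rewrite sumr_const card_ord mulr_natl.
  rewrite exchange_big /= -card_Sn mulr_natl -sumr_const; apply: eq_bigr => s _.
  by rewrite [RHS](reindex_inj (@perm_inj _ (s^-1)%g)).
have n_neq0 : n%:R != 0 :> R by rewrite pnatr_eq0 -lt0n.
have fact_neq0 : n`!%:R != 0 :> R by rewrite pnatr_eq0 -lt0n fact_gt0.
rewrite /unif_perm -mulr_sumr; apply: (mulfI n_neq0).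
by rewrite mulrCA card_mul mulKf // mulVKf.
Qed.

Lemma sum_unif_perm_in (A : {set 'I_n}) (o : 'I_n) :
  \sum_(s : {perm 'I_n} | (s^-1)%g o \in A) @unif_perm R n s = #|A|%:R / n%:R.
Proof.
rewrite -sumr_mul_natb (sum_unif_perm (fun j => (j \in A : nat)%:R)) mulrC.
congr (_ / _); rewrite -sum1_card natr_sum [RHS]big_mkcond.
by apply: eq_bigr => j _; case: (j \in A).
Qed.

End UniformPerm.

Section PowerCounts.
Variables (R : realFieldType) (m n : nat).
Hypothesis m_gt0 : (0 < m)%N.
Implicit Type Y : R.

Definition npow_le Y : nat := #|[set j : 'I_n | ((j.+1 ^ m)%N)%:R <= Y]|.
Definition npow_lt Y : nat := #|[set j : 'I_n | ((j.+1 ^ m)%N)%:R < Y]|.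

Lemma npow_lt_le Y : (npow_lt Y <= npow_le Y)%N.
Proof. by apply/subset_leq_card/subsetP => j; rewrite !inE => /ltW. Qed.

Lemma npow_le_exp Y : 0 <= Y -> ((npow_le Y ^ m)%N)%:R <= Y.
Proof.
move=> Y_ge0; have [||i iY le_i] := card_ord_set_le
  (A := [set j : 'I_n | ((j.+1 ^ m)%N)%:R <= Y]) (P := fun i => ((i ^ m)%N)%:R <= Y).
- by rewrite /= exp0n.
- by move=> j; rewrite inE.
by apply: le_trans iY; rewrite ler_nat leq_exp2r.
Qed.

Lemma npow_lt_exp Y : 0 < Y -> ((npow_lt Y ^ m)%N)%:R < Y.
Proof.
move=> Y_gt0; have [||i iY le_i] := card_ord_set_le
  (A := [set j : 'I_n | ((j.+1 ^ m)%N)%:R < Y]) (P := fun i => ((i ^ m)%N)%:R < Y).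
- by rewrite /= exp0n.
- by move=> j; rewrite inE.
by apply: le_lt_trans iY; rewrite ler_nat leq_exp2r.
Qed.

(* Divided by n^m, [mid_pow (y * beta)] bounds the adversary's chance to win an object
   with the bid y against the bids [pow_bids] below: a tie with them is a half win. *)
Definition mid_pow Y : R := (((npow_le Y ^ m)%N)%:R + ((npow_lt Y ^ m)%N)%:R) / 2.

Lemma mid_pow_le Y : mid_pow Y <= ((npow_le Y ^ m)%N)%:R.
Proof.
have : ((npow_lt Y ^ m)%N)%:R <= ((npow_le Y ^ m)%N)%:R :> R.
  by rewrite ler_nat leq_exp2r // npow_lt_le.
rewrite /mid_pow; lra.
Qed.

Lemma mid_pow_tie Y : (npow_lt Y < npow_le Y)%N ->
  mid_pow Y <= ((npow_le Y ^ m)%N)%:R - 2^-1.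
Proof.
move=> lt_le; have : ((npow_lt Y ^ m)%N)%:R + 1 <= ((npow_le Y ^ m)%N)%:R :> R.
  by rewrite natr1 ler_nat ltn_exp2r.
rewrite /mid_pow; lra.
Qed.

Lemma sum_mid_pow_le (Y : 'I_n -> R) (B : nat) : (2 <= n)%N -> (forall j, 0 < Y j) ->
  \sum_j Y j <= B%:R -> \sum_j mid_pow (Y j) <= B%:R - 1.
Proof.
move=> n_ge2 Y_gt0 sumY.
pose w j := (npow_le (Y j) ^ m)%N.
have w_le j : (w j)%:R <= Y j by apply/npow_le_exp/ltW.
have sum_w_le : \sum_j (w j)%:R <= B%:R :> R by apply: le_trans sumY; apply: ler_sum.
have [all_tie|/forallPn [j0]] := boolP [forall j, npow_lt (Y j) < npow_le (Y j)]%N.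
  apply: (@le_trans _ _ (\sum_j ((w j)%:R - 2^-1))).
    by apply: ler_sum => j _; apply/mid_pow_tie/(forallP all_tie).
  have : 2 <= n%:R :> R by rewrite ler_nat.
  rewrite sumrB sumr_const card_ord -[_ *+ n]mulr_natr; lra.
rewrite -leqNgt => le_lt.
have w_lt : (w j0)%:R < Y j0.
  have -> : w j0 = (npow_lt (Y j0) ^ m)%N.
    by rewrite /w; congr (_ ^ _)%N; apply/anti_leq; rewrite le_lt npow_lt_le.
  exact: npow_lt_exp.
have : (\sum_j w j < B)%N.
  rewrite -(ltr_nat R) natr_sum; apply: lt_le_trans sumY.
  rewrite (bigD1 j0) // [X in _ < X](bigD1 j0) //=.
  by apply: ltr_leD => //; apply: ler_sum.
rewrite -(ler_nat R) -natr1 natr_sum -lerBrDr => sum_w_lt.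
by apply: le_trans sum_w_lt; apply: ler_sum => j _; apply: mid_pow_le.
Qed.

End PowerCounts.

Definition pow_bids (R : realFieldType) (m n : nat) : 'I_n -> R :=
  fun j => ((j.+1 ^ m)%N)%:R / (\sum_(i < n) (i.+1 ^ m)%N)%:R.

Section PowerBids.
Variables (R : realFieldType) (m n : nat).
Hypotheses (m_gt0 : (0 < m)%N) (n_ge2 : (2 <= n)%N).
Local Notation beta := ((\sum_(i < n) (i.+1 ^ m)%N)%:R : R).

Lemma beta_gt0 : 0 < beta.
Proof. by rewrite ltr0n (bigD1 (Ordinal (ltnW n_ge2))) //= exp1n. Qed.

Lemma exp_share_pow_bids_le (a : 'I_n -> R) sA o :
  exp_share m a (@pow_bids R m n) (@unif_perm R n) sA o None <=
  mid_pow m n (bid_on a sA o * beta) / ((n ^ m)%N)%:R.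
Proof.
set y := bid_on a sA o.
have prob_le : \sum_(s | bid_on (@pow_bids R m n) s o <= y) @unif_perm R n s =
    (npow_le m n (y * beta))%:R / n%:R.
  rewrite /npow_le /npow_lt -(sum_unif_perm_in _ _ o); apply: eq_bigl => s.
  by rewrite !inE /bid_on /pow_bids ler_pdivrMr ?beta_gt0.
have prob_lt : \sum_(s | bid_on (@pow_bids R m n) s o < y) @unif_perm R n s =
    (npow_lt m n (y * beta))%:R / n%:R.
  rewrite /npow_le /npow_lt -(sum_unif_perm_in _ _ o); apply: eq_bigl => s.
  by rewrite !inE /bid_on /pow_bids ltr_pdivrMr ?beta_gt0.
apply: le_trans (exp_share_None_le _ _ _ (perm_dist_unif R n) _ _) _.
by rewrite prob_le prob_lt /mid_pow !expr_div_n -!natrX -mulrDl mulrAC.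
Qed.

Lemma adv_wins_pow_bids_le (a : 'I_n -> R) (q : {perm 'I_n} -> R) :
  bid_seq a -> perm_dist q ->
  adv_wins m a q (@pow_bids R m n) (@unif_perm R n) <= (beta - 1) / ((n ^ m)%N)%:R.
Proof.
move=> [a_gt0 sum_a_le1] [q_ge0 q1].
have objects_le sA : \sum_o exp_share m a (@pow_bids R m n) (@unif_perm R n) sA o None
    <= (beta - 1) / ((n ^ m)%N)%:R.
  apply: le_trans (ler_sum _ (fun o _ => exp_share_pow_bids_le a sA o)) _.
  rewrite -mulr_suml (reindex_inj (@perm_inj _ sA)) /=.
  under eq_bigr do rewrite /bid_on permK.
  apply: ler_wpM2r; first by rewrite invr_ge0 ler0n.
  apply: sum_mid_pow_le => // [j|]; first by rewrite mulr_gt0 ?beta_gt0.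
  by rewrite -mulr_suml -[X in _ <= X]mul1r ler_pM2r ?beta_gt0.
rewrite /adv_wins expected_winsE.
apply: le_trans (ler_sum _ (fun sA _ => ler_wpM2l (q_ge0 sA) (objects_le sA))) _.
by rewrite -mulr_suml q1 mul1r.
Qed.

End PowerBids.

Definition shift_bids (R : realFieldType) (n : nat) (x : 'I_n -> R) (j0 : 'I_n) :
  'I_n -> R :=
  fun j => if j == j0 then x j0 / n%:R else x j + x j0 / n%:R.

Lemma shift_bids_gt (R : realFieldType) (n : nat) (x : 'I_n -> R) (j0 j : 'I_n) :
  0 < x j0 -> j != j0 -> x j < shift_bids x j0 j.
Proof.
move=> x0_gt0 /negbTE ne; rewrite /shift_bids ne ltrDl divr_gt0 // ltr0n.
by case: (n) j0 {ne j x x0_gt0} => [[]|].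
Qed.

Lemma bid_seq_shift (R : realFieldType) (n : nat) (x : 'I_n -> R) (j0 : 'I_n) :
  bid_seq x -> bid_seq (shift_bids x j0).
Proof.
case=> x_gt0 sum_x_le1.
have n_gt0 : (0 < n)%N by case: (n) j0 {x x_gt0 sum_x_le1} => [[]|].
have eps_gt0 : 0 < x j0 / n%:R by rewrite divr_gt0 ?ltr0n.
split=> [j|]; first by rewrite /shift_bids; case: eqP => _; rewrite ?addr_gt0.
suff -> : \sum_j shift_bids x j0 j = \sum_j x j by [].
rewrite (bigD1 j0) //= [RHS](bigD1 j0) //= {1}/shift_bids eqxx.
under eq_bigr => j /negbTE ne do rewrite /shift_bids ne.
rewrite big_split /= sumr_const cardC1 card_ord addrCA -mulrS prednK //.
by rewrite -[x j0 / _ *+ n]mulr_natr divfK 1?addrC // pnatr_eq0 -lt0n.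
Qed.

Lemma sum_prob_bid_lt (R : realFieldType) (n : nat) (x : 'I_n -> R)
    (p : {perm 'I_n} -> R) (y : R) :
  perm_dist p -> \sum_o \sum_(s | bid_on x s o < y) p s = #|[set i | x i < y]|%:R.
Proof.
case=> _ p1; rewrite (exchange_big_dep xpredT) //=.
transitivity (\sum_s p s * #|[set i | x i < y]|%:R); last by rewrite -mulr_suml p1 mul1r.
apply: eq_bigr => s _; rewrite sumr_const -[p s *+ _]mulr_natr.
rewrite -(card_preimset _ (@perm_inj _ (s^-1)%g)); congr (_ * _%:R).
by apply: eq_card => o; rewrite !inE.
Qed.

Lemma sum_count_shift_ge (R : realFieldType) (m n : nat) (x : 'I_n -> R) (j0 : 'I_n) :
  (0 < m)%N -> bid_seq x -> (forall j, x j0 <= x j) ->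
  (\sum_(i < n) i.+1 ^ m - 1 <= \sum_j #|[set i | (x i < shift_bids x j0 j)%R]| ^ m)%N.
Proof.
case: n x j0 => [x [] //|n x j0] m_gt0 [x_gt0 _] x_min.
rewrite big_ord_recl /= exp1n add1n subn1.
under eq_bigr do rewrite /bump leq0n add1n.
have := @sum_rank_ge _ _ _ x (fun i => (i.+1 ^ m)%N) [set~ j0].
rewrite cardsC1 card_ord /= => rank_le.
apply: leq_trans (rank_le _) _; first by move=> i j ij; rewrite leq_exp2r.
rewrite [X in (_ <= X)%N](bigD1 j0) //= (eq_bigl (fun j => j != j0)); last first.
  by move=> j; rewrite in_setC1.
apply: leq_trans (leq_addl _ _); apply: leq_sum => j ne_j0; rewrite leq_exp2r //.
set S := [set i in [set~ j0] | x i <= x j].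
have -> : #|S|.+1 = #|j0 |: S| by rewrite cardsU1 !inE eqxx.
apply/subset_leq_card/subsetP => i; rewrite !inE => /predU1P [->|/andP [_ le_ij]].
  by apply: le_lt_trans (x_min j) (shift_bids_gt (x_gt0 j0) ne_j0).
by apply: le_lt_trans le_ij (shift_bids_gt (x_gt0 j0) ne_j0).
Qed.

Lemma adv_wins_shift_ge (R : realFieldType) (m n : nat) (x : 'I_n -> R)
    (p : {perm 'I_n} -> R) (j0 : 'I_n) :
  (0 < m)%N -> bid_seq x -> perm_dist p -> (forall j, x j0 <= x j) ->
  ((\sum_(i < n) (i.+1 ^ m)%N)%:R - 1) / ((n ^ m)%N)%:R <=
  adv_wins m (shift_bids x j0) (@unif_perm R n) x p.
Proof.
move=> m_gt0 x_bids p_dist x_min; set a := shift_bids x j0.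
have n_gt0 : (0 < n)%N by case: (n) j0 {a x x_bids p_dist x_min} => [[]|].
pose P o y := \sum_(s | bid_on x s o < y) p s.
pose N y := #|[set i | x i < y]|.
have power_mean y : (N y ^ m)%:R / n%:R ^+ m.-1 <= \sum_o P o y ^+ m.
  have := @expr_sum_le R _ (P^~ y) m.-1; rewrite prednK // card_ord.
  rewrite /P sum_prob_bid_lt // natrX ler_pdivrMr ?exprn_gt0 ?ltr0n // mulrC; apply.
  by move=> o; apply: sumr_ge0 => s _; case: p_dist.
rewrite /adv_wins expected_winsE.
apply: le_trans (_ : _ <= \sum_sA @unif_perm R n sA * \sum_o P o (bid_on a sA o) ^+ m) _;
  last first.
  apply: ler_sum => sA _; apply: ler_wpM2l; first by case: (perm_dist_unif R n).
  by apply: ler_sum => o _; apply: exp_share_None_ge.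
have -> : \sum_sA @unif_perm R n sA * \sum_o P o (bid_on a sA o) ^+ m =
    n%:R^-1 * \sum_j \sum_o P o (a j) ^+ m.
  under eq_bigr do rewrite mulr_sumr.
  rewrite exchange_big /=.
  under eq_bigr do rewrite (sum_unif_perm (fun j => P _ (a j) ^+ m)).
  by rewrite -mulr_sumr exchange_big.
apply: le_trans (ler_wpM2l _ (ler_sum _ (fun j _ => power_mean (a j)))); last first.
  by rewrite invr_ge0 ler0n.
rewrite -mulr_suml -natr_sum mulrCA -invfM -exprS prednK // -natrX.
rewrite ler_wpM2r ?invr_ge0 ?ler0n //.
rewrite -(natrB _ (_ : 1 <= _)%N) ?ler_nat; first exact: sum_count_shift_ge.
by rewrite (bigD1 (Ordinal n_gt0)) //= exp1n.
Qed.

Theorem theorem4p5 (R : realType) (k n : nat) (hk : (2 <= k)%N) (hn : (k <= n)%N) :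
  let beta : R := (\sum_(i < n) (i.+1 ^ k.-1)%N)%:R in
  let c : 'I_n -> R := fun j => ((j.+1 ^ k.-1)%N)%:R / beta in
  let bound : R := (k.-1%:R)^-1 * (n%:R - (beta - 1) / ((n ^ k.-1)%N)%:R) in
  (forall (a : 'I_n -> R) (q : {perm 'I_n} -> R),
     bid_seq a -> perm_dist q ->
     forall d : 'I_k.-1, bound <= exp_wins a q c (@unif_perm R n) d)
  /\
  (forall (x : 'I_n -> R) (p : {perm 'I_n} -> R),
     bid_seq x -> perm_dist p ->
     exists (a : 'I_n -> R) (q : {perm 'I_n} -> R),
       [/\ bid_seq a, perm_dist q &
           forall d : 'I_k.-1, exp_wins a q x p d <= bound]).
Proof.
case: k hk hn => [|[|m]] // _ hn beta c bound.
have n_ge2 : (2 <= n)%N by apply: leq_trans hn.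
have m_inv_ge0 : 0 <= m.+1%:R^-1 :> R by rewrite invr_ge0 ler0n.
have unif_dist := perm_dist_unif R n.
split=> [a q a_bids q_dist d | x p x_bids p_dist].
  rewrite /bound exp_wins_adv_wins //.
  by rewrite ler_wpM2l // lerB // adv_wins_pow_bids_le.
have [j0 _ x_min] := @arg_minP _ _ 'I_n (Ordinal (ltnW n_ge2)) predT x isT.
exists (shift_bids x j0), (@unif_perm R n); split=> [||d].
- exact: bid_seq_shift.
- exact: unif_dist.
rewrite /bound exp_wins_adv_wins //.
by rewrite ler_wpM2l // lerB // adv_wins_shift_ge // => j; apply: x_min.
Qed.
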